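(* Let $G$ be the automorphism group of $(\mathbb{Q},<)$. If $f \in G$ has infinitely many non-trivial orbitals, then $f$ has a non-identity restriction $g \in G$ which can be written as $g = g_1 g_2$ with $g_1, g_2 \in G$, where $g_1$ is an orbital of $g$ (in the group-element sense defined in the context) and $g$ is conjugate to $g_2$ in $G$.
   Context: For $f \in G$, an orbital of $f$ is an equivalence class of $\mathbb{Q}$ under the relation $a \sim b$ iff there are integers $m,n$ with $f^m a \le b \le f^n a$; an orbital is non-trivial if it has more than one point (equivalently, $f$ moves its points). The support of $f$ is the set of points moved by $f$. A bump is a non-identity element of $G$ having exactly one non-trivial orbital. An element $g \in G$ is a restriction of $f$ if the support of $g$ is contained in the support of $f$ and $g$ agrees with $f$ on the support of $g$. An element $g_1 \in G$ is said to be an orbital of $g$ if $g_1$ is a bump whose support is contained in that of $g$ and $g_1$ agrees with $g$ on its support. Elements $x,y$ are conjugate in $G$ if $y = h x h^{-1}$ for some $h \in G$. *)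

From HB Require Import structures.
From mathcomp Require Import all_boot all_order all_algebra.
From mathcomp Require Import boolp classical_sets cardinality.
Set Implicit Arguments. Unset Strict Implicit. Unset Printing Implicit Defensive.
Import Order.TTheory GRing.Theory Num.Theory.
Local Open Scope ring_scope.
Local Open Scope classical_set_scope.

Record aut : Type := Aut {
  autf :> rat -> rat;
  autinv : rat -> rat;
  autK : cancel autf autinv;
  autVK : cancel autinv autf;
  aut_mono : {mono autf : x y / x < y}
}.

Definition apow (f : aut) (m : int) : rat -> rat :=
  match m with
  | Posz n => iter n (autf f)
  | Negz n => iter n.+1 (autinv f)
  end.

Definition orb_rel (f : aut) (a b : rat) : Prop :=
  exists m n : int, apow f m a <= b /\ b <= apow f n a.

Definition orbital_of (f : aut) (a : rat) : set rat := [set b | orb_rel f a b].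

Definition orbitals (f : aut) : set (set rat) :=
  [set C | exists a, C = orbital_of f a].

Definition nontrivial (C : set rat) : Prop :=
  exists x y, C x /\ C y /\ x <> y.

Definition nontrivial_orbitals (f : aut) : set (set rat) :=
  [set C | orbitals f C /\ nontrivial C].

Definition supp (f : aut) : set rat := [set x | f x <> x].

Definition is_identity (f : aut) : Prop := forall x, f x = x.

Definition bump (f : aut) : Prop :=
  ~ is_identity f /\
  exists C, nontrivial_orbitals f C /\
            forall D, nontrivial_orbitals f D -> D = C.

Definition restriction (g f : aut) : Prop :=
  supp g `<=` supp f /\ forall x, supp g x -> g x = f x.

Definition orbital_elt (g1 g : aut) : Prop :=
  bump g1 /\ supp g1 `<=` supp g /\ forall x, supp g1 x -> g1 x = g x.

Definition conjugate (x y : aut) : Prop :=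
  exists h : aut, forall q, y q = h (x (autinv h q)).

From Pilot Require Import Defs.
From HB Require Import structures.
From mathcomp Require Import all_boot all_order all_algebra.
From mathcomp Require Import boolp classical_sets cardinality.
From mathcomp Require Import zify lra.
Import Order.TTheory GRing.Theory Num.Theory.
Local Open Scope ring_scope.
Local Open Scope classical_set_scope.
Set Implicit Arguments. Unset Strict Implicit. Unset Printing Implicit Defensive.

(* Choose points a_0 < a_1 < ... in infinitely many distinct non-trivial orbitals
   of f (by Ramsey, a monotone sequence of representatives exists; the decreasing
   case is reduced to the increasing one by conjugating with x |-> -x), and pass
   to a subsequence on which f moves every a_n in the same direction and on which
   neither "the part of Q below the orbital of a_n has a maximum" nor "the part
   above it has a minimum" depends on n.  Put c_i = a_(2i+1), let g be f restricted
   to the orbitals of the c_i, g1 its restriction to the orbital of c_0 and g2 its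
   restriction to the other ones, so that g = g1 g2.  An automorphism h of Q with
   h g2 h^-1 = g is glued from pieces: an f-equivariant map from the orbital of
   c_(i+1) onto that of c_i (orbitals moving in the same direction are conjugate:
   match one fundamental domain affinely and spread along the powers of f), order
   isomorphisms between corresponding gaps (convex sets with non-empty interior,
   thanks to the orbitals of the a_(2i), and with the same endpoint behaviour,
   which is all that matters for convex subsets of Q), and the identity above all
   the orbitals. *)

(** * Integer powers and orbitals *)

Lemma int_ind1 (P : int -> Prop) :
  P 0 -> (forall m, P m -> P (m + 1)) -> (forall m, P m -> P (m - 1)) ->
  forall m, P m.
Proof.
move=> P0 PD1 PB1; elim/int_rec => [//|n IH|n IH].
  by rewrite -addn1 PoszD; apply: PD1.
by rewrite -addn1 PoszD opprD; apply: PB1.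
Qed.

Section AutTheory.
Variable f : aut.

Lemma autinv_mono : {mono autinv f : x y / x < y}.
Proof. by move=> x y; rewrite -(aut_mono f) !autVK. Qed.

Lemma aut_le : {mono f : x y / x <= y}.
Proof. by apply: le_mono => x y; rewrite aut_mono. Qed.

Lemma apowD1 m x : apow f (m + 1) x = f (apow f m x).
Proof.
case: m => [n|[|n]]; first by have -> : Posz n + 1 = Posz n.+1 by lia.
  by rewrite /= autVK.
have -> : Negz n.+1 + 1 = Negz n by rewrite !NegzE; lia.
by rewrite /= autVK.
Qed.

Lemma apowB1 m x : apow f (m - 1) x = autinv f (apow f m x).
Proof. by rewrite -[in RHS](subrK 1 m) apowD1 autK. Qed.

Lemma apowD m n x : apow f (m + n) x = apow f m (apow f n x).
Proof.
elim/int_ind1: m => [|m IH|m IH]; first by rewrite add0r.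
  by rewrite addrAC !apowD1 IH.
by rewrite addrAC !apowB1 IH.
Qed.

Lemma apowK m : cancel (apow f m) (apow f (- m)).
Proof. by move=> x; rewrite -apowD addNr. Qed.

Lemma apowNK m : cancel (apow f (- m)) (apow f m).
Proof. by move=> x; rewrite -apowD addrN. Qed.

Lemma apow_lt m : {mono apow f m : x y / x < y}.
Proof.
elim/int_ind1: m => [//|m IH|m IH] x y; first by rewrite !apowD1 aut_mono IH.
by rewrite !apowB1 autinv_mono IH.
Qed.

Lemma apow_le m : {mono apow f m : x y / x <= y}.
Proof. by apply: le_mono => x y; rewrite apow_lt. Qed.

Lemma apow_fixed a m : f a = a -> apow f m a = a.
Proof.
move=> fa; elim/int_ind1: m => [//|m IH|m IH]; first by rewrite apowD1 IH.
by rewrite apowB1 IH -{1}fa autK.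
Qed.

End AutTheory.

Definition convex (C : set rat) :=
  forall x y z, C x -> C z -> x <= y -> y <= z -> C y.
Definition below (C : set rat) x := forall y, C y -> x < y.
Definition above (C : set rat) x := forall y, C y -> y < x.

Lemma convex_below_or_above (C : set rat) x :
  convex C -> ~ C x -> below C x \/ above C x.
Proof.
move=> cvC Cx; case: (pselect (below C x)) => [|/existsNP[y /not_implyP[Cy]]].
  by left.
move=> /negP; rewrite -leNgt => le_yx; right => z Cz.
rewrite ltNge; apply/negP => le_xz; exact: Cx (cvC _ _ _ Cy Cz le_yx le_xz).
Qed.

Section OrbitRelation.
Variable f : aut.

Lemma orb_rel_refl a : orb_rel f a a.
Proof. by exists 0, 0. Qed.

Lemma orb_rel_sym a b : orb_rel f a b -> orb_rel f b a.
Proof.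
case=> m [n [le_mb le_bn]]; exists (- n), (- m); split.
  by rewrite -(apow_le f n) apowNK.
by rewrite -(apow_le f m) apowNK.
Qed.

Lemma orb_rel_trans a b c : orb_rel f a b -> orb_rel f b c -> orb_rel f a c.
Proof.
case=> m [n [le_mb le_bn]] [p [q [le_pc le_cq]]]; exists (p + m), (q + n).
by rewrite !apowD; split; [apply: le_trans le_pc | apply: le_trans le_cq _];
  rewrite apow_le.
Qed.

Lemma orb_rel_apow a m : orb_rel f a (apow f m a).
Proof. by exists m, m. Qed.

Lemma orb_rel_f a : orb_rel f a (f a).
Proof. exact: (orb_rel_apow a 1). Qed.

Lemma orb_rel_autinv a : orb_rel f a (autinv f a).
Proof. exact: (orb_rel_apow a (-1)). Qed.

Lemma orbital_convex a : convex (orbital_of f a).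
Proof.
move=> x y z [m [n [le_mx _]]] [p [q [_ le_zq]]] le_xy le_yz.
by exists m, q; split; [apply: le_trans le_xy | apply: le_trans le_zq].
Qed.

Lemma orb_rel_fixed a b : f a = a -> orb_rel f a b -> b = a.
Proof.
move=> fa [m [n]]; rewrite !apow_fixed // => -[le_ab le_ba].
by apply/eqP; rewrite eq_le le_ab le_ba.
Qed.

Lemma orbital_of_eq a b : orb_rel f a b -> orbital_of f a = orbital_of f b.
Proof.
move=> ab; rewrite eqEsubset; split => x /=.
  exact: orb_rel_trans (orb_rel_sym ab).
exact: orb_rel_trans ab.
Qed.

Lemma orbital_trichotomy a x :
  orb_rel f a x \/ below (orbital_of f a) x \/ above (orbital_of f a) x.
Proof.
case: (pselect (orb_rel f a x)) => [|ax]; first by left.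
by right; apply: convex_below_or_above ax; apply: orbital_convex.
Qed.

Lemma orbital_lt a b : a < b -> ~ orb_rel f a b ->
  forall x y, orb_rel f a x -> orb_rel f b y -> x < y.
Proof.
move=> lt_ab ab x y ax by_.
have ay : ~ orb_rel f a y by move=> ay; apply: ab (orb_rel_trans ay (orb_rel_sym by_)).
case: (orbital_trichotomy a y) => [//|[y_below|]]; last exact.
exfalso; apply: ab; apply: orb_rel_sym.
exact: orbital_convex by_ (orb_rel_refl b) (ltW (y_below a (orb_rel_refl a))) (ltW lt_ab).
Qed.

Lemma nontrivial_orbitalE a : nontrivial (orbital_of f a) <-> f a <> a.
Proof.
split=> [[x [y [ax [ay nxy]]]] fa|fa].
  by rewrite (orb_rel_fixed fa ax) (orb_rel_fixed fa ay) in nxy.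
exists a, (f a); do 2?split; [exact: orb_rel_refl | exact: orb_rel_f | by move/esym].
Qed.

End OrbitRelation.

Definition block (s : int -> rat) (n : int) : set rat :=
  [set x | s n <= x < s (n + 1)].

Section IncreasingIntSeq.
Variable s : int -> rat.
Hypothesis s_incr : forall n, s n < s (n + 1).

Lemma incr_seq_lt : {homo s : m n / m < n}.
Proof.
move=> m n lt_mn; have [d ->] : exists d : nat, n = m + d.+1%:Z.
  by exists (`|n - m| - 1)%N; lia.
have step k : s (m + k%:Z) < s (m + k.+1%:Z) by rewrite -addn1 PoszD addrA.
by rewrite -[in s m](addr0 m); apply: (homo_ltn lt_trans step).
Qed.

Lemma incr_seq_le : {mono s : m n / m <= n}.
Proof. exact: le_mono incr_seq_lt. Qed.

Lemma block_lt m n x y : m < n -> block s m x -> block s n y -> x < y.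
Proof.
move=> lt_mn /andP[_ lt_x] /andP[le_y _]; apply: lt_le_trans lt_x (le_trans _ le_y).
by rewrite incr_seq_le; lia.
Qed.

Lemma block_exists m k x : s m <= x -> x < s k -> exists n, block s n x.
Proof.
move=> le_mx lt_xk.
have lt_mk : m < k by rewrite -(leW_mono incr_seq_le); apply: le_lt_trans lt_xk.
have [d def_k] : exists d : nat, k = m + d%:Z by exists `|k - m|%N; lia.
subst k; clear lt_mk; elim: d m le_mx lt_xk => [|d IH] m le_mx lt_xk.
  by have := le_lt_trans le_mx lt_xk; rewrite addr0 ltxx.
have [lt_x|le_x] := ltP x (s (m + 1)); first by exists m; rewrite /block /= le_mx.
by apply: (IH (m + 1)) => //; rewrite -addrA -PoszD add1n.
Qed.

End IncreasingIntSeq.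

(** * Order isomorphisms between subsets of Q *)

(* The functions are total; only their behaviour on [C] and [D] matters. *)
Record oiso (C D : set rat) := OIso {
  oiso_fun :> rat -> rat;
  oiso_inv : rat -> rat;
  oiso_in : forall x, C x -> D (oiso_fun x);
  oiso_inv_in : forall y, D y -> C (oiso_inv y);
  oisoK : forall x, C x -> oiso_inv (oiso_fun x) = x;
  oisoVK : forall y, D y -> oiso_fun (oiso_inv y) = y;
  oiso_lt : forall x y, C x -> C y -> x < y -> oiso_fun x < oiso_fun y }.

Lemma oiso_mono C D (F : oiso C D) x y : C x -> C y -> (F x < F y) = (x < y).
Proof.
move=> Cx Cy; apply/idP/idP => [|/(oiso_lt F Cx Cy)//].
apply: contraTT; rewrite -!leNgt le_eqVlt => /orP[/eqP->//|lt_yx].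
exact: ltW (oiso_lt F Cy Cx lt_yx).
Qed.

Definition aut_of_oiso (F : oiso setT setT) : aut :=
  Aut (fun x => oisoK F (I : setT x)) (fun y => oisoVK F (I : setT y))
      (fun x y => oiso_mono F (I : setT x) (I : setT y)).

Definition oiso_id (C : set rat) : oiso C C :=
  OIso (fun x Cx => Cx) (fun x Cx => Cx) (fun x _ => erefl) (fun x _ => erefl)
       (fun x y _ _ lt_xy => lt_xy).

Definition oiso_cast (C D C' D' : set rat) (eC : forall x, C' x <-> C x)
    (eD : forall y, D' y <-> D y) (F : oiso C D) : oiso C' D' :=
  OIso (fun x C'x => (eD _).2 (oiso_in F ((eC x).1 C'x)))
       (fun y D'y => (eC _).2 (oiso_inv_in F ((eD y).1 D'y)))
       (fun x C'x => oisoK F ((eC x).1 C'x))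
       (fun y D'y => oisoVK F ((eD y).1 D'y))
       (fun x y C'x C'y => oiso_lt F ((eC x).1 C'x) ((eC y).1 C'y)).

Lemma oiso_castE C D C' D' eC eD (F : oiso C D) x :
  @oiso_cast C D C' D' eC eD F x = F x.
Proof. by []. Qed.

Lemma lt_total_neq d (T : orderType d) (i j : T) : i <> j -> (i < j)%O \/ (j < i)%O.
Proof. by move/eqP/lt_total/orP. Qed.

Section Glue.
Variables (I : Type) (lt : I -> I -> Prop).
Hypothesis lt_total : forall i j, i <> j -> lt i j \/ lt j i.

Definition ordered_pieces (P : I -> set rat) :=
  forall i j x y, lt i j -> P i x -> P j y -> x < y.

Lemma ordered_pieces_uniq P i j x : ordered_pieces P -> P i x -> P j x -> i = j.
Proof.
move=> ordP Pix Pjx; apply: contrapT => /lt_total[] ltij.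
  by have := ordP _ _ _ _ ltij Pix Pjx; rewrite ltxx.
by have := ordP _ _ _ _ ltij Pjx Pix; rewrite ltxx.
Qed.

Variables (C D : I -> set rat) (F : forall i, oiso (C i) (D i)).
Hypotheses (C_ordered : ordered_pieces C) (D_ordered : ordered_pieces D).

Let piecewise (P : I -> set rat) (G : I -> rat -> rat) x :=
  if pselect (exists i, P i x) is left Px then G (proj1_sig (cid Px)) x else x.

Let piecewiseE P G i x : ordered_pieces P -> P i x -> piecewise P G x = G i x.
Proof.
rewrite /piecewise => ordP Pix; case: pselect => [Px|]; last by case; exists i.
by case: cid => j /= Pjx; rewrite (ordered_pieces_uniq ordP Pjx Pix).
Qed.

Definition oiso_glue : oiso (\bigcup_i C i) (\bigcup_i D i).
Proof.
refine (@OIso _ _ (piecewise C F) (piecewise D (fun i => oiso_inv (F i))) _ _ _ _ _).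
- move=> x [i _ Cix]; exists i => //.
  by rewrite (piecewiseE F C_ordered Cix); apply: oiso_in.
- move=> y [i _ Diy]; exists i => //.
  by rewrite (piecewiseE _ D_ordered Diy); apply: oiso_inv_in.
- move=> x [i _ Cix]; rewrite (piecewiseE F C_ordered Cix).
  by rewrite (piecewiseE _ D_ordered (oiso_in _ Cix)) oisoK.
- move=> y [i _ Diy]; rewrite (piecewiseE _ D_ordered Diy).
  by rewrite (piecewiseE F C_ordered (oiso_inv_in _ Diy)) oisoVK.
- move=> x y [i _ Cix] [j _ Cjy] lt_xy.
  rewrite (piecewiseE F C_ordered Cix) (piecewiseE F C_ordered Cjy).
  case: (pselect (i = j)) => [eq_ij|/lt_total[] ltij].
  + by move: Cjy; rewrite -eq_ij => Ciy; apply: oiso_lt.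
  + exact: D_ordered ltij (oiso_in _ Cix) (oiso_in _ Cjy).
  + by have := C_ordered ltij Cjy Cix; rewrite ltNge (ltW lt_xy).
Defined.

Lemma oiso_glueE i x : C i x -> oiso_glue x = F i x.
Proof. exact: piecewiseE. Qed.

End Glue.

Lemma affine_le (R : numDomainType) (a b c : R) :
  0 < c -> {mono (fun x => b + (x - a) * c) : x y / x <= y}.
Proof. by move=> c_gt0 x y; rewrite lerD2l ler_pM2r // lerD2r. Qed.

Section AffineOiso.
Variables p q p' q' : rat.
Hypotheses (lt_pq : p < q) (lt_pq' : p' < q').

Let r := (q' - p') / (q - p).
Let r_gt0 : 0 < r. Proof. by rewrite divr_gt0 // subr_gt0. Qed.
Let rV_gt0 : 0 < r^-1. Proof. by rewrite invr_gt0. Qed.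
Let aff x := p' + (x - p) * r.
Let affV y := p + (y - p') * r^-1.

Definition affine_oiso : oiso [set x | p <= x < q] [set y | p' <= y < q'].
Proof.
have affp : aff p = p' by rewrite /aff subrr mul0r addr0.
have affq : aff q = q' by rewrite /aff /r mulrC divfK ?subr_eq0 ?gt_eqF //; lra.
have affVp : affV p' = p by rewrite /affV subrr mul0r addr0.
have affK x : affV (aff x) = x.
  by rewrite /affV /aff addrAC subrr add0r mulfK ?gt_eqF // addrC subrK.
have affVK y : aff (affV y) = y.
  by rewrite /aff /affV addrAC subrr add0r mulfVK ?gt_eqF // addrC subrK.
have affVq : affV q' = q by rewrite -affq affK.
have aff_le := affine_le p p' r_gt0; have affV_le := affine_le p' p rV_gt0.
have aff_lt := leW_mono aff_le; have affV_lt := leW_mono affV_le.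
refine (@OIso _ _ aff affV _ _ (fun x _ => affK x) (fun y _ => affVK y) _) => /=.
- by move=> x /andP[le_px lt_xq]; rewrite -{1}affp -affq /aff aff_le aff_lt le_px.
- by move=> y /andP[le_py lt_yq]; rewrite -{1}affVp -affVq /affV affV_le affV_lt le_py.
- by move=> x y _ _; rewrite /aff aff_lt.
Defined.

End AffineOiso.

Definition chain_oiso (s s' : int -> rat) (s_incr : forall n, s n < s (n + 1))
    (s'_incr : forall n, s' n < s' (n + 1))
    (F : forall n, oiso (block s n) (block s' n)) :
  oiso (\bigcup_n block s n) (\bigcup_n block s' n) :=
  oiso_glue (@lt_total_neq _ int) F (fun m n => @block_lt s s_incr m n)
    (fun m n => @block_lt s' s'_incr m n).

Lemma chain_oisoE s s' s_incr s'_incr F n x :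
  block s n x -> @chain_oiso s s' s_incr s'_incr F x = F n x.
Proof. exact: oiso_glueE. Qed.

(** * Conjugacy of orbitals *)

Definition autV (f : aut) : aut := Aut (autVK f) (autK f) (autinv_mono f).

Lemma apow_autV f m x : apow (autV f) m x = apow f (- m) x.
Proof.
elim/int_ind1: m x => [//|m IH|m IH] x; first by rewrite apowD1 IH opprD apowB1.
by rewrite apowB1 IH opprB addrC apowD1.
Qed.

Lemma orbital_autV f a : orbital_of (autV f) a = orbital_of f a.
Proof.
rewrite eqEsubset; split=> x [m [n]]; rewrite ?apow_autV => -[le_mx le_xn].
  by exists (- m), (- n).
by exists (- m), (- n); rewrite !apow_autV !opprK.
Qed.

Section UpwardOrbital.
Variables (f : aut) (a : rat).
Hypothesis a_up : a < f a.

Lemma apow_up_incr n : apow f n a < apow f (n + 1) a.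
Proof. by rewrite apowD apow_lt. Qed.

Lemma orbital_blocks x : orbital_of f a x <-> (\bigcup_n block (apow f ^~ a) n) x.
Proof.
split=> [[m [n [le_mx le_xn]]]|[n _ /andP[le_nx lt_xn]]].
  have [k blk] := block_exists apow_up_incr le_mx (le_lt_trans le_xn (apow_up_incr n)).
  by exists k.
by exists n, (n + 1); split => //; apply: ltW.
Qed.

End UpwardOrbital.

Definition oiso_conj (f : aut) (n : int) C D (F : oiso C D) :
  oiso [set x | C (apow f (- n) x)] [set y | D (apow f (- n) y)].
Proof.
refine (@OIso _ _ (fun x => apow f n (F (apow f (- n) x)))
  (fun y => apow f n (oiso_inv F (apow f (- n) y))) _ _ _ _ _) => /=.
- by move=> x Cx; rewrite apowK; apply: oiso_in.
- by move=> y Dy; rewrite apowK; apply: oiso_inv_in.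
- by move=> x Cx; rewrite apowK oisoK // apowNK.
- by move=> y Dy; rewrite apowK oisoVK // apowNK.
- by move=> x y Cx Cy lt_xy; rewrite apow_lt oiso_mono // apow_lt.
Defined.

Section OrbitalConjugacy.
Variables (f : aut) (a a' : rat).
Hypotheses (a_up : a < f a) (a'_up : a' < f a').

Let block_shift b n x :
  block (apow f ^~ b) n x <-> block (apow f ^~ b) 0 (apow f (- n) x).
Proof.
by rewrite /block /= -(apow_le f (- n)) -(apow_lt f (- n)) -!apowD addNr addKr.
Qed.

(* The affine map between the fundamental domains [a, f a) and [a', f a'),
   transported to the other domains along the powers of f. *)
Definition orbital_oiso : oiso (orbital_of f a) (orbital_of f a') :=
  oiso_cast (orbital_blocks a_up) (orbital_blocks a'_up)
    (chain_oiso (apow_up_incr a_up) (apow_up_incr a'_up) (fun n =>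
       oiso_cast (block_shift a n) (block_shift a' n)
         (oiso_conj f n (affine_oiso (apow_up_incr a_up 0) (apow_up_incr a'_up 0))))).

Lemma orbital_oiso_comm x :
  orbital_of f a x -> orbital_oiso (f x) = f (orbital_oiso x).
Proof.
case/(orbital_blocks a_up) => n _ blk_x.
have blk_fx : block (apow f ^~ a) (n + 1) (f x).
  by move: blk_x; rewrite /block /= !apowD1 aut_le aut_mono.
rewrite /orbital_oiso !oiso_castE (chain_oisoE _ _ _ blk_x) (chain_oisoE _ _ _ blk_fx) /=.
by rewrite apowD1 opprD apowD [apow f (-1) _]/= autK.
Qed.

End OrbitalConjugacy.

Lemma orbital_conj (f : aut) a a' :
  (a < f a /\ a' < f a') \/ (f a < a /\ f a' < a') ->
  exists F : oiso (orbital_of f a) (orbital_of f a'),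
    forall x, orbital_of f a x -> F (f x) = f (F x).
Proof.
case=> [[a_up a'_up]|[a_dn a'_dn]].
  by exists (orbital_oiso a_up a'_up); apply: orbital_oiso_comm.
have a_up : a < autV f a by rewrite -(autinv_mono f) autK in a_dn.
have a'_up : a' < autV f a' by rewrite -(autinv_mono f) autK in a'_dn.
have eO b x : orbital_of f b x <-> orbital_of (autV f) b x by rewrite orbital_autV.
exists (oiso_cast (eO a) (eO a') (orbital_oiso a_up a'_up)) => x ax.
have fx : orbital_of (autV f) a (f x).
  by rewrite orbital_autV; apply: orb_rel_trans ax (orb_rel_f f x).
rewrite !oiso_castE; apply: (can_inj (autVK f)); rewrite autK.
change (autV f (orbital_oiso a_up a'_up (f x)) = orbital_oiso a_up a'_up x).
by rewrite -orbital_oiso_comm //= autK.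
Qed.

(** * Convex subsets of Q *)

Definition is_min (C : set rat) x := C x /\ forall y, C y -> x <= y.
Definition is_max (C : set rat) x := C x /\ forall y, C y -> y <= x.
Definition has_min (C : set rat) := exists x, is_min C x.
Definition has_max (C : set rat) := exists x, is_max C x.
Definition inner (C : set rat) : set rat :=
  [set x | C x /\ (exists2 y, C y & y < x) /\ (exists2 z, C z & x < z)].

Lemma no_max_above (C : set rat) x : ~ has_max C -> C x -> exists2 y, C y & x < y.
Proof.
move=> nmax Cx; apply: contrapT => nabove; apply: nmax; exists x; split => // y Cy.
by rewrite leNgt; apply/negP => lt_xy; apply: nabove; exists y.
Qed.

Lemma no_min_below (C : set rat) x : ~ has_min C -> C x -> exists2 y, C y & y < x.
Proof.
move=> nmin Cx; apply: contrapT => nbelow; apply: nmin; exists x; split => // y Cy.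
by rewrite leNgt; apply/negP => lt_yx; apply: nbelow; exists y.
Qed.

Section ConvexBlocks.
Variables (C : set rat) (c : rat) (nxt prv : rat -> rat).
Hypotheses (cvC : convex C) (Cc : C c).
Hypotheses (nxtP : forall x, C x -> C (nxt x) /\ x < nxt x)
           (prvP : forall x, C x -> C (prv x) /\ prv x < x).

Let q k : rat := odflt 0 (unpickle k).
Let raise x k := if pselect (C (q k)) then Order.max x (q k) else x.
Let lower x k := if pselect (C (q k)) then Order.min x (q k) else x.

Let raiseP x k : C x -> C (raise x k) /\ x <= raise x k /\ (C (q k) -> q k <= raise x k).
Proof.
rewrite /raise; case: pselect => [Cq|//] Cx.
by rewrite maxEle; case: leP => [le_xq|/ltW le_qx]; do !split => // _.
Qed.

Let lowerP x k : C x -> C (lower x k) /\ lower x k <= x /\ (C (q k) -> lower x k <= q k).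
Proof.
rewrite /lower; case: pselect => [Cq|//] Cx.
by rewrite minEle; case: leP => [le_xq|/ltW le_qx]; do !split => // _.
Qed.

(* [walk_up k.+1] exceeds the [k]-th rational of the enumeration [q] when that
   rational lies in [C], and [walk_down k.+1] lies below it; hence the blocks of
   the sequence [zs] exhaust [C]. *)
Fixpoint walk_up k := if k is k'.+1 then nxt (raise (walk_up k') k') else c.
Fixpoint walk_down k := if k is k'.+1 then prv (lower (walk_down k') k') else c.

Let upP k :
  C (walk_up k) /\ walk_up k < walk_up k.+1 /\ (C (q k) -> q k < walk_up k.+1).
Proof.
have up_in j : C (walk_up j).
  by elim: j => //= j IH; apply: (nxtP (raiseP j IH).1).1.
have [Cr [le_r le_qr]] := raiseP k (up_in k); have [_ lt_r] := nxtP Cr.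
split; [exact: up_in | split; first exact: le_lt_trans le_r lt_r].
by move=> /le_qr le_q; apply: le_lt_trans le_q lt_r.
Qed.

Let dnP k :
  C (walk_down k) /\ walk_down k.+1 < walk_down k /\ (C (q k) -> walk_down k.+1 < q k).
Proof.
have dn_in j : C (walk_down j).
  by elim: j => //= j IH; apply: (prvP (lowerP j IH).1).1.
have [Cl [le_l le_lq]] := lowerP k (dn_in k); have [_ lt_l] := prvP Cl.
split; [exact: dn_in | split; first exact: lt_le_trans lt_l le_l].
by move=> /le_lq le_q; apply: lt_le_trans lt_l le_q.
Qed.

Let zs (n : int) := if n is Negz k then walk_down k.+1 else walk_up `|n|%N.

Let zs_incr n : zs n < zs (n + 1).
Proof.
case: n => [k|[|k]].
- have -> : Posz k + 1 = Posz k.+1 by lia.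
  exact: (upP k).2.1.
- exact: (dnP 0).2.1.
- have -> : Negz k.+1 + 1 = Negz k by rewrite !NegzE; lia.
  exact: (dnP k.+1).2.1.
Qed.

Lemma convex_blocks_of :
  exists s : int -> rat, (forall n, s n < s (n + 1)) /\
    (forall x, C x <-> (\bigcup_n block s n) x).
Proof.
have zs_in n : C (zs n) by case: n => [k|k]; [exact: (upP k).1 | exact: (dnP k.+1).1].
exists zs; split => // x; split=> [Cx|[n _ /andP[le_x lt_x]]]; last first.
  exact: cvC (zs_in n) (zs_in (n + 1)) le_x (ltW lt_x).
have q_x : q (pickle x) = x by rewrite /q pickleK.
have [n blk] : exists n, block zs n x.
  apply: (block_exists zs_incr (m := Negz (pickle x)) (k := Posz (pickle x).+1)).
    by apply: ltW; have := (dnP (pickle x)).2.2; rewrite q_x; apply.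
  by have := (upP (pickle x)).2.2; rewrite q_x; apply.
by exists n.
Qed.

End ConvexBlocks.

Lemma convex_blocks (C : set rat) : convex C -> (exists c, C c) ->
  ~ has_min C -> ~ has_max C ->
  exists s : int -> rat, (forall n, s n < s (n + 1)) /\
    (forall x, C x <-> (\bigcup_n block s n) x).
Proof.
move=> cvC [c Cc] nmin nmax.
have [nxt nxtP] : {nxt : rat -> rat & forall x, C x -> C (nxt x) /\ x < nxt x}.
  apply: (@choice _ _ (fun x y => C x -> C y /\ x < y)) => x.
  by case: (pselect (C x)) => [/(no_max_above nmax)[y]|]; [exists y | exists x].
have [prv prvP] : {prv : rat -> rat & forall x, C x -> C (prv x) /\ prv x < x}.
  apply: (@choice _ _ (fun x y => C x -> C y /\ y < x)) => x.
  by case: (pselect (C x)) => [/(no_min_below nmin)[y]|]; [exists y | exists x].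
exact: convex_blocks_of cvC Cc nxtP prvP.
Qed.

Lemma unbounded_convex_oiso (C C' : set rat) :
  convex C -> (exists c, C c) -> ~ has_min C -> ~ has_max C ->
  convex C' -> (exists c, C' c) -> ~ has_min C' -> ~ has_max C' ->
  inhabited (oiso C C').
Proof.
move=> cvC neC nminC nmaxC cvC' neC' nminC' nmaxC'.
have [s [s_incr Cs]] := convex_blocks cvC neC nminC nmaxC.
have [s' [s'_incr Cs']] := convex_blocks cvC' neC' nminC' nmaxC'.
constructor; apply: oiso_cast Cs Cs' (chain_oiso s_incr s'_incr _) => n.
exact: affine_oiso (s_incr n) (s'_incr n).
Qed.

Lemma inner_convex (C : set rat) : convex C -> convex (inner C).
Proof.
move=> cvC x y z [Cx [[u Cu lt_ux] _]] [Cz [_ [v Cv lt_zv]]] le_xy le_yz.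
split; first exact: cvC Cx Cz le_xy le_yz.
split; first by exists u => //; apply: lt_le_trans le_xy.
by exists v => //; apply: le_lt_trans lt_zv.
Qed.

Lemma inner_no_min (C : set rat) : convex C -> ~ has_min (inner C).
Proof.
move=> cvC [m [[Cm [[y Cy lt_ym] above_m]] min_m]].
have lt_y_mid : y < (y + m) / 2 by lra.
have lt_mid_m : (y + m) / 2 < m by lra.
have : inner C ((y + m) / 2).
  split; first exact: cvC Cy Cm (ltW lt_y_mid) (ltW lt_mid_m).
  by split; [exists y | exists m].
by move/min_m; rewrite leNgt lt_mid_m.
Qed.

Lemma inner_no_max (C : set rat) : convex C -> ~ has_max (inner C).
Proof.
move=> cvC [m [[Cm [below_m [z Cz lt_mz]]] max_m]].
have lt_m_mid : m < (m + z) / 2 by lra.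
have lt_mid_z : (m + z) / 2 < z by lra.
have : inner C ((m + z) / 2).
  split; first exact: cvC Cm Cz (ltW lt_m_mid) (ltW lt_mid_z).
  by split; [exists m | exists z].
by move/max_m; rewrite leNgt lt_m_mid.
Qed.

Lemma subsingleton_oiso (S S' : set rat) :
  (forall x y, S x -> S y -> x = y) -> (forall x y, S' x -> S' y -> x = y) ->
  ((exists x, S x) <-> (exists y, S' y)) -> inhabited (oiso S S').
Proof.
move=> S_uniq S'_uniq eS; case: (pselect (exists x, S x)) => [[x Sx]|noS].
  have [y S'y] := eS.1 (ex_intro _ x Sx); constructor.
  refine (@OIso _ _ (fun=> y) (fun=> x) (fun _ _ => S'y) (fun _ _ => Sx) _ _ _).
  - by move=> u Su; apply: S_uniq.
  - by move=> v S'v; apply: S'_uniq.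
  - by move=> u v Su Sv; rewrite (S_uniq _ _ Su Sv) ltxx.
have -> : S = set0 by apply/seteqP; split=> // x Sx; apply: noS; exists x.
have -> : S' = set0 by apply/seteqP; split=> // y S'y; apply: noS; apply: eS.2; exists y.
exact: inhabits (oiso_id set0).
Qed.

Definition convex_piece (C : set rat) (i : nat) : set rat :=
  match i with 0 => is_min C | 1 => inner C | 2 => is_max C | _ => set0 end.

Lemma convex_piece_lt (C : set rat) i j x y : (exists x, inner C x) ->
  (i < j)%N -> convex_piece C i x -> convex_piece C j y -> x < y.
Proof.
case=> c [Cc [[u Cu lt_uc] [v Cv lt_cv]]].
case: i => [|[|[|i]]] //; case: j => [|[|[|j]]] //= _.
- by move=> [_ min_x] [_ [[w Cw lt_wy] _]]; apply: le_lt_trans (min_x w Cw) lt_wy.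
- move=> [_ min_x] [_ max_y].
  exact: le_lt_trans (min_x u Cu) (lt_le_trans lt_uc (max_y c Cc)).
- by move=> [_ [_ [w Cw lt_xw]]] [_ max_y]; apply: lt_le_trans lt_xw (max_y w Cw).
Qed.

Lemma convex_pieces (C : set rat) x : C x <-> (\bigcup_i convex_piece C i) x.
Proof.
split=> [Cx|[[|[|[|i]]] _ //= []//]].
case: (pselect (is_min C x)) => [min_x|/not_andP[//|/existsNP[u /not_implyP[Cu]]]].
  by exists 0%N.
move/negP; rewrite -ltNge => lt_ux.
case: (pselect (is_max C x)) => [max_x|/not_andP[//|/existsNP[v /not_implyP[Cv]]]].
  by exists 2%N.
by move/negP; rewrite -ltNge => lt_xv; exists 1%N => //; split; [|split; [exists u|exists v]].
Qed.

Lemma convex_oiso (C C' : set rat) : convex C -> convex C' ->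
  (exists x, inner C x) -> (exists x, inner C' x) ->
  (has_min C <-> has_min C') -> (has_max C <-> has_max C') -> inhabited (oiso C C').
Proof.
move=> cvC cvC' neC neC' e_min e_max.
have uniq_min (K : set rat) x y : is_min K x -> is_min K y -> x = y.
  by move=> [Kx min_x] [Ky min_y]; apply/eqP; rewrite eq_le min_x // min_y.
have uniq_max (K : set rat) x y : is_max K x -> is_max K y -> x = y.
  by move=> [Kx max_x] [Ky max_y]; apply/eqP; rewrite eq_le max_x // max_y.
have F i : inhabited (oiso (convex_piece C i) (convex_piece C' i)).
  case: i => [|[|[|i]]] /=.
  - exact (subsingleton_oiso (uniq_min C) (uniq_min C') e_min).
  - exact: unbounded_convex_oiso (inner_convex cvC) neC (inner_no_min cvC) (inner_no_max cvC)
      (inner_convex cvC') neC' (inner_no_min cvC') (inner_no_max cvC').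
  - exact (subsingleton_oiso (uniq_max C) (uniq_max C') e_max).
  - exact: inhabits (oiso_id set0).
constructor; apply: oiso_cast (convex_pieces C) (convex_pieces C') _.
apply: (oiso_glue (@lt_total_neq _ nat) (fun i => inhabited_witness (F i))).
- by move=> i j x y; apply: convex_piece_lt.
- by move=> i j x y; apply: convex_piece_lt.
Qed.

Lemma below_convex (C : set rat) : convex (below C).
Proof. by move=> x y z _ Cz _ le_yz w Cw; apply: le_lt_trans le_yz (Cz w Cw). Qed.

Lemma above_convex (C : set rat) : convex (above C).
Proof. by move=> x y z Cx _ le_xy _ w Cw; apply: lt_le_trans (Cx w Cw) le_xy. Qed.

Lemma convexI (C D : set rat) : convex C -> convex D -> convex (C `&` D).
Proof.
move=> cvC cvD x y z [Cx Dx] [Cz Dz] le_xy le_yz.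
by split; [apply: cvC Cx Cz le_xy le_yz | apply: cvD Dx Dz le_xy le_yz].
Qed.

Lemma below_no_min (C : set rat) : ~ has_min (below C).
Proof.
case=> m [below_m min_m].
have : below C (m - 1) by move=> y Cy; have := below_m y Cy; lra.
by move/min_m; lra.
Qed.

Lemma inner_of_orbital (f : aut) (C : set rat) p :
  f p <> p -> orbital_of f p `<=` C -> inner C p.
Proof.
move=> moved sub_C; split; first exact/sub_C/orb_rel_refl.
have Cf := sub_C _ (orb_rel_f f p); have Cfinv := sub_C _ (orb_rel_autinv f p).
have [lt_pf|lt_fp|/esym//] := ltgtP p (f p).
  split; last by exists (f p).
  by exists (autinv f p); rewrite // -(aut_mono f) autVK.
split; first by exists (f p).
by exists (autinv f p); rewrite // -(aut_mono f) autVK.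
Qed.

Section GapEndpoints.
Variables (C D : set rat) (w : rat).
Hypothesis gap_w : (above C `&` below D) w.

Lemma gap_has_min : has_min (above C `&` below D) <-> has_min (above C).
Proof.
split=> [[m [[above_m below_m] min_m]]|[m [above_m min_m]]]; last first.
  exists m; split=> [|x [above_x _]]; last exact: min_m.
  by split=> // y Dy; apply: le_lt_trans (min_m _ gap_w.1) (gap_w.2 y Dy).
exists m; split=> // x above_x; case: (pselect (below D x)) => [below_x|]; first exact: min_m.
move/existsNP=> [y /not_implyP[Dy /negP]]; rewrite -leNgt => le_yx.
exact: ltW (lt_le_trans (below_m y Dy) le_yx).
Qed.

Lemma gap_has_max : has_max (above C `&` below D) <-> has_max (below D).
Proof.
split=> [[m [[above_m below_m] max_m]]|[m [below_m max_m]]]; last first.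
  exists m; split=> [|x [_ below_x]]; last exact: max_m.
  by split=> // y Cy; apply: lt_le_trans (gap_w.1 y Cy) (max_m _ gap_w.2).
exists m; split=> // x below_x; case: (pselect (above C x)) => [above_x|]; first exact: max_m.
move/existsNP=> [y /not_implyP[Cy /negP]]; rewrite -leNgt => le_xy.
exact: ltW (le_lt_trans le_xy (above_m y Cy)).
Qed.

End GapEndpoints.

(** * Restrictions *)

Definition orbit_closed (f : aut) (S : set rat) := forall x y, S x -> orb_rel f x y -> S y.

Lemma orbital_closed f a : orbit_closed f (orbital_of f a).
Proof. by move=> x y; apply: orb_rel_trans. Qed.
Arguments orbital_closed : clear implicits.

Lemma bigcup_orbital_closed f (b : nat -> rat) :
  orbit_closed f (\bigcup_i orbital_of f (b i)).
Proof. by move=> x y [i _ bx] xy; exists i => //; apply: orb_rel_trans xy. Qed.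
Arguments bigcup_orbital_closed : clear implicits.

Section Restriction.
Variables (f : aut) (S : set rat).
Hypothesis S_closed : orbit_closed f S.

Let rf x := if pselect (S x) then f x else x.
Let rg x := if pselect (S x) then autinv f x else x.

Let rf_in x : S x -> rf x = f x. Proof. by rewrite /rf; case: pselect. Qed.
Let rf_out x : ~ S x -> rf x = x. Proof. by rewrite /rf; case: pselect. Qed.
Let rg_in x : S x -> rg x = autinv f x. Proof. by rewrite /rg; case: pselect. Qed.
Let rg_out x : ~ S x -> rg x = x. Proof. by rewrite /rg; case: pselect. Qed.

Let rfK : cancel rf rg.
Proof.
move=> x; case: (pselect (S x)) => [Sx|nSx]; last by rewrite rf_out ?rg_out.
by rewrite rf_in // rg_in ?autK //; apply: S_closed Sx (orb_rel_f f x).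
Qed.

Let rgK : cancel rg rf.
Proof.
move=> x; case: (pselect (S x)) => [Sx|nSx]; last by rewrite rg_out ?rf_out.
by rewrite rg_in // rf_in ?autVK //; apply: S_closed Sx (orb_rel_autinv f x).
Qed.

Let rf_lt : {homo rf : x y / x < y}.
Proof.
move=> x y lt_xy.
case: (pselect (S x)) => [Sx|nSx]; case: (pselect (S y)) => [Sy|nSy];
  rewrite ?(rf_in Sx) ?(rf_out nSx) ?(rf_in Sy) ?(rf_out nSy) //.
- by rewrite aut_mono.
- apply: (orbital_lt lt_xy _ (orb_rel_f f x) (orb_rel_refl f y)).
  by move/(S_closed Sx).
- apply: (orbital_lt lt_xy _ (orb_rel_refl f x) (orb_rel_f f y)).
  by move/orb_rel_sym/(S_closed Sy).
Qed.

Definition restrict : aut := Aut rfK rgK (leW_mono (le_mono rf_lt)).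

Lemma restrict_in x : S x -> restrict x = f x.
Proof. exact: rf_in. Qed.

Lemma restrict_out x : ~ S x -> restrict x = x.
Proof. exact: rf_out. Qed.

Lemma supp_restrict x : supp restrict x -> S x.
Proof. by move=> moved; apply: contrapT => /restrict_out. Qed.

Lemma restrict_restriction : restriction restrict f.
Proof.
split=> x moved; have Sx := supp_restrict moved; last exact: restrict_in.
by rewrite /supp /= -(restrict_in Sx).
Qed.

Lemma apow_restrict m x : S x -> apow restrict m x = apow f m x.
Proof.
move=> Sx; elim/int_ind1: m => [//|m IH|m IH]; rewrite ?apowD1 ?apowB1 IH.
  by rewrite restrict_in //; apply: S_closed Sx (orb_rel_apow f x m).
by rewrite /= rg_in //; apply: S_closed Sx (orb_rel_apow f x m).
Qed.

Lemma orbital_restrict a : S a -> orbital_of restrict a = orbital_of f a.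
Proof.
move=> Sa; rewrite eqEsubset; split=> x [m [n]] /=;
  by rewrite ?apow_restrict // => -[le_mx le_xn]; exists m, n; rewrite ?apow_restrict.
Qed.

End Restriction.

Lemma restrict_orbital_bump (f : aut) a :
  f a <> a -> Defs.bump (restrict (orbital_closed f a)).
Proof.
move=> moved; set g := restrict _.
have ga : g a = f a by apply: restrict_in; apply: orb_rel_refl.
split; first by move/(_ a); rewrite ga.
exists (orbital_of f a); split.
  split; last exact/nontrivial_orbitalE.
  by exists a; rewrite orbital_restrict //; apply: orb_rel_refl.
move=> D [[p ->] nontriv_p].
case: (pselect (orbital_of f a p)) => [ap|nap].
  by rewrite orbital_restrict //; apply/esym/orbital_of_eq.
have /nontrivial_orbitalE := nontriv_p; by rewrite restrict_out.
Qed.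

Lemma restrict_orbital_elt (f : aut) a (T : set rat) (T_closed : orbit_closed f T) :
  f a <> a -> T a -> orbital_elt (restrict (orbital_closed f a)) (restrict T_closed).
Proof.
move=> moved Ta; have sub_T x : orbital_of f a x -> T x := T_closed _ _ Ta.
have agree x : supp (restrict (orbital_closed f a)) x ->
    restrict (orbital_closed f a) x = restrict T_closed x.
  by move/supp_restrict => ax; rewrite !restrict_in //; apply: sub_T.
split; first exact: restrict_orbital_bump.
split=> [x moved_x|]; last exact: agree.
by change (restrict T_closed x <> x); rewrite -(agree x moved_x).
Qed.

Lemma restrict_split (f : aut) (S S1 S2 : set rat) (S_closed : orbit_closed f S)
    (S1_closed : orbit_closed f S1) (S2_closed : orbit_closed f S2) :
  (forall x, S x <-> S1 x \/ S2 x) -> (forall x, S1 x -> ~ S2 x) ->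
  forall x, restrict S_closed x = restrict S1_closed (restrict S2_closed x).
Proof.
move=> eS disj x; case: (pselect (S2 x)) => [S2x|nS2x].
  have nS1fx : ~ S1 (f x) by move/disj; apply; apply: S2_closed S2x (orb_rel_f f x).
  rewrite (restrict_in S2_closed S2x) (restrict_out S1_closed nS1fx).
  by apply: restrict_in; apply/eS; right.
rewrite (restrict_out S2_closed nS2x); case: (pselect (S1 x)) => [S1x|nS1x].
  by rewrite (restrict_in S1_closed S1x); apply: restrict_in; apply/eS; left.
by rewrite (restrict_out S1_closed nS1x); apply: restrict_out => /eS[].
Qed.

(** * The reflection x |-> -x *)

Definition setN (C : set rat) : set rat := [set x | C (- x)].

Lemma setNK C : setN (setN C) = C.
Proof. by apply/seteqP; split=> x; rewrite /setN /= opprK. Qed.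

Lemma nontrivial_setN C : nontrivial C -> nontrivial (setN C).
Proof.
case=> x [y [Cx [Cy nxy]]]; exists (- x), (- y); rewrite /setN /= !opprK.
by split=> //; split=> // /oppr_inj.
Qed.

Section Reflection.
Variable f : aut.

Let fN x := - f (- x).
Let fNV x := - autinv f (- x).
Let fNK : cancel fN fNV. Proof. by move=> x; rewrite /fN /fNV opprK autK opprK. Qed.
Let fNVK : cancel fNV fN. Proof. by move=> x; rewrite /fN /fNV opprK autVK opprK. Qed.
Let fN_mono : {mono fN : x y / x < y}.
Proof. by move=> x y; rewrite ltrN2 aut_mono ltrN2. Qed.

Definition autN : aut := Aut fNK fNVK fN_mono.

Lemma autNE x : autN x = - f (- x). Proof. by []. Qed.
Lemma autNVE x : autinv autN x = - autinv f (- x). Proof. by []. Qed.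

Lemma apow_autN m x : apow autN m x = - apow f m (- x).
Proof.
elim/int_ind1: m x => [|m IH|m IH] x; first exact: (esym (opprK x)).
  by rewrite !apowD1 IH autNE opprK.
by rewrite !apowB1 IH autNVE opprK.
Qed.

Lemma orbital_autN a : orbital_of autN a = setN (orbital_of f (- a)).
Proof.
apply/seteqP; split=> x [m [n]]; rewrite /setN /= ?apow_autN => -[le_mx le_xn];
  exists n, m; rewrite ?apow_autN ?opprK.
- by split; [rewrite lerNr | rewrite lerNl].
- by split; [rewrite lerNl | rewrite lerNr].
Qed.

Lemma orb_rel_autN a b : orb_rel autN a b <-> orb_rel f (- a) (- b).
Proof. by rewrite -[orb_rel autN a b]/(orbital_of autN a b) orbital_autN. Qed.

Lemma nontrivial_orbitals_autN D :
  nontrivial_orbitals autN D <-> nontrivial_orbitals f (setN D).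
Proof.
split=> [[[a ->] ntD]|[[a eD] ntD]].
  split; first by exists (- a); rewrite orbital_autN setNK.
  by have := nontrivial_setN ntD; rewrite orbital_autN setNK.
split; last by rewrite -[D]setNK; apply: nontrivial_setN.
by exists (- a); rewrite orbital_autN opprK -eD setNK.
Qed.

Lemma supp_autN x : supp autN x <-> supp f (- x).
Proof.
rewrite /supp /mkset autNE; split=> moved eq_fx; apply: moved; first by rewrite eq_fx opprK.
by apply: oppr_inj; rewrite opprK.
Qed.

End Reflection.

Lemma autNK f x : autN (autN f) x = f x.
Proof. by rewrite !autNE !opprK. Qed.

Lemma non_identity_autN f : ~ is_identity f -> ~ is_identity (autN f).
Proof. by move=> nid idN; apply: nid => x; rewrite -autNK autNE idN opprK. Qed.

Lemma bump_autN f : Defs.bump f -> Defs.bump (autN f).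
Proof.
case=> nid [C [ntC C_uniq]]; split; first exact: non_identity_autN.
exists (setN C); split; first by apply/nontrivial_orbitals_autN; rewrite setNK.
by move=> D /nontrivial_orbitals_autN/C_uniq <-; rewrite setNK.
Qed.

Definition has_split_restriction (f : aut) := exists g : aut,
  restriction g f /\ ~ is_identity g /\
  exists g1 g2 : aut,
    (forall q, g q = g1 (g2 q)) /\ orbital_elt g1 g /\ conjugate g2 g.

Lemma has_split_restriction_autN f :
  has_split_restriction (autN f) -> has_split_restriction f.
Proof.
case=> g [[sub_g agree_g] [nid [g1 [g2 [g_split [[bump_g1 [sub_g1 agree_g1]] [h conj_h]]]]]]].
exists (autN g); split.
  split=> [x /supp_autN/sub_g/supp_autN|x /supp_autN/agree_g eq_g]; first by rewrite opprK.
  by rewrite autNE eq_g autNE !opprK.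
split; first exact: non_identity_autN.
exists (autN g1), (autN g2); split; first by move=> q; rewrite !autNE g_split opprK.
split; last by exists (autN h) => q; rewrite !autNE autNVE conj_h !opprK.
split; first exact: bump_autN.
split=> [x /supp_autN/sub_g1 ?|x /supp_autN/agree_g1 eq_g1]; first exact/supp_autN.
by rewrite !autNE eq_g1.
Qed.

(** * Chains of orbitals *)

Lemma infinite_seq (T : pointedType) (A : set T) :
  infinite_set A -> exists2 u : nat -> T, (forall n, A (u n)) & injective u.
Proof.
move=> /infiniteP/pcard_leP/injfunPex[u u_fun u_inj].
exists u => [n|m n eq_u]; first exact: u_fun.
by apply: u_inj; rewrite ?in_setT.
Qed.

Lemma iterate_step (P : nat -> Prop) (R : nat -> nat -> Prop) n0 : P n0 ->
  (forall n, P n -> exists2 m, P m & (n < m)%N /\ R n m) ->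
  exists s : nat -> nat, forall k, [/\ P (s k), (s k < s k.+1)%N & R (s k) (s k.+1)].
Proof.
move=> Pn0 step.
have [g gP] : {g : nat -> nat & forall n, P n -> [/\ P (g n), (n < g n)%N & R n (g n)]}.
  apply: (@choice _ _ (fun n m => P n -> [/\ P m, (n < m)%N & R n m])) => n.
  by case: (pselect (P n)) => [/step[m Pm [lt_nm Rnm]]|]; [exists m | exists n].
have Ps k : P (iter k g n0) by elim: k => //= k IH; case: (gP _ IH).
by exists (fun k => iter k g n0) => k; case: (gP _ (Ps k)).
Qed.

Lemma constant_subseq (P : nat -> Prop) : exists2 s : nat -> nat,
  (forall k, s k < s k.+1)%N & forall n m, P (s n) <-> P (s m).
Proof.
case: (pselect (forall N, exists2 n, P n & (N <= n)%N)) => [often|/existsNP[N]].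
  have [n0 Pn0 _] := often 0%N.
  have step n : P n -> exists2 m, P m & (n < m)%N /\ True.
    by move=> _; have [m Pm lt_nm] := often n.+1; exists m.
  have [s sP] := iterate_step Pn0 step.
  exists s => [k|n m]; first by case: (sP k).
  by split=> _; [case: (sP m) | case: (sP n)].
move=> rarely; have notP k : ~ P (N + k)%N.
  by move=> Pk; apply: rarely; exists (N + k)%N; rewrite ?leq_addr.
by exists (addn N) => [k|n m]; [rewrite addnS | split=> /notP].
Qed.

Lemma monotone_subseq (r : nat -> rat) : injective r -> exists s : nat -> nat,
  (forall k, s k < s k.+1)%N /\
  ((forall k, r (s k) < r (s k.+1)) \/ (forall k, r (s k.+1) < r (s k))).
Proof.
move=> r_inj; pose peak n := forall m, (n < m)%N -> r m < r n.
case: (pselect (forall N, exists2 n, peak n & (N <= n)%N)) => [often|/existsNP[N]].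
  have [n0 Pn0 _] := often 0%N.
  have step n : peak n -> exists2 m, peak m & (n < m)%N /\ True.
    by move=> _; have [m Pm lt_nm] := often n.+1; exists m.
  have [s sP] := iterate_step Pn0 step.
  exists s; split=> [k|]; first by case: (sP k).
  by right=> k; have [peak_s lt_s _] := sP k; apply: peak_s.
move=> no_peak.
have step n : (N <= n)%N -> exists2 m, (N <= m)%N & (n < m)%N /\ r n < r m.
  move=> le_Nn; have /existsNP[m /not_implyP[lt_nm]] : ~ peak n.
    by move=> peak_n; apply: no_peak; exists n.
  move/negP; rewrite -leNgt le_eqVlt => /orP[/eqP/r_inj eq_mn|lt_nm'].
    by move: lt_nm; rewrite eq_mn ltnn.
  by exists m; rewrite ?(leq_trans le_Nn (ltnW lt_nm)).
have [s sP] := iterate_step (leqnn N) step.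
by exists s; split=> [k|]; [case: (sP k) | left=> k; case: (sP k)].
Qed.

Definition orbital_chain (f : aut) (a : nat -> rat) :=
  [/\ forall n, a n < a n.+1, forall n, f (a n) <> a n &
      forall n m, n <> m -> ~ orb_rel f (a n) (a m)].

Lemma incr_inj (s : nat -> nat) : (forall k, s k < s k.+1)%N -> injective s.
Proof.
move=> s_incr k l eq_s; have s_lt := homo_ltn ltn_trans s_incr.
by case: (ltngtP k l) => // /s_lt; rewrite eq_s ltnn.
Qed.

Lemma orbital_chain_subseq f a s : orbital_chain f a ->
  (forall k, s k < s k.+1)%N -> orbital_chain f (a \o s).
Proof.
case=> a_incr moved sep s_incr; split=> [k|k|k l nkl] /=.
- exact: (homo_ltn lt_trans a_incr).
- exact: moved.
- exact/sep/(contra_not (@incr_inj s s_incr k l)).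
Qed.

Lemma orbital_chain_of_infinite f : infinite_set (nontrivial_orbitals f) ->
  exists a, orbital_chain f a \/ orbital_chain (autN f) a.
Proof.
move=> /infinite_seq[O O_nt O_inj].
have [r eO] : {r : nat -> rat & forall n, O n = orbital_of f (r n)}.
  apply: (@choice _ _ (fun n x => O n = orbital_of f x)) => n.
  by have [[x ->] _] := O_nt n; exists x.
have moved n : f (r n) <> r n by apply/nontrivial_orbitalE; rewrite -eO; case: (O_nt n).
have sep n m : n <> m -> ~ orb_rel f (r n) (r m).
  by move=> nmn rnm; apply: nmn; apply: O_inj; rewrite !eO; apply: orbital_of_eq.
have r_inj : injective r.
  by move=> n m eq_r; apply: contrapT => /sep; rewrite eq_r; apply; apply: orb_rel_refl.
have [s [s_incr [r_up|r_dn]]] := monotone_subseq r_inj.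
  exists (r \o s); left; split=> [k|k|k l nkl] /=; [exact: r_up | exact: moved |].
  by apply/sep/(contra_not (@incr_inj s s_incr k l)).
exists (fun k => - r (s k)); right; split=> [k|k|k l nkl]; first by rewrite ltrN2.
  by rewrite autNE opprK => /oppr_inj; apply: moved.
by rewrite orb_rel_autN !opprK; apply/sep/(contra_not (@incr_inj s s_incr k l)).
Qed.

(** * The conjugating automorphism *)

(* In the order of Q: Below, Orb 0, Gap 0, Orb 1, Gap 1, ..., Above. *)
Inductive piece := Below | Orb of nat | Gap of nat | Above.

Definition piece_rank (p : piece) : nat :=
  match p with Below | Above => 0 | Orb i => (2 * i).+1 | Gap i => (2 * i).+2 end.

Definition piece_lt (p q : piece) : Prop :=
  match p, q with
  | Above, _ => False
  | _, Above => True
  | _, _ => (piece_rank p < piece_rank q)%N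
  end.

Lemma piece_lt_total p q : p <> q -> piece_lt p q \/ piece_lt q p.
Proof.
case: p q => [|i|i|] [|j|j|] npq //=; try by [left | right | case: npq].
all: apply/orP; rewrite -neq_ltn; apply/eqP => e; try lia.
all: by apply: npq; congr (_ _); lia.
Qed.

Definition chain_piece (f : aut) (e : nat -> rat) (p : piece) : set rat :=
  match p with
  | Below => below (orbital_of f (e 0%N))
  | Orb i => orbital_of f (e i)
  | Gap i => above (orbital_of f (e i)) `&` below (orbital_of f (e i.+1))
  | Above => [set x | forall i, above (orbital_of f (e i)) x]
  end.

Section ChainPieces.
Variables (f : aut) (e : nat -> rat).
Hypotheses (e_incr : forall i, e i < e i.+1)
           (e_sep : forall i j, i <> j -> ~ orb_rel f (e i) (e j)).

Lemma chain_orbital_lt i j x y :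
  (i < j)%N -> orbital_of f (e i) x -> orbital_of f (e j) y -> x < y.
Proof.
move=> lt_ij; apply: (orbital_lt (homo_ltn lt_trans e_incr lt_ij)).
by apply: e_sep => eij; move: lt_ij; rewrite eij ltnn.
Qed.

Lemma chain_above_le i j x :
  (j <= i)%N -> above (orbital_of f (e i)) x -> above (orbital_of f (e j)) x.
Proof.
rewrite leq_eqVlt => /orP[/eqP->//|lt_ji] above_x y Ojy; have ei := orb_rel_refl f (e i).
exact: lt_trans (chain_orbital_lt lt_ji Ojy ei) (above_x _ ei).
Qed.

Lemma chain_below_le i j x :
  (i <= j)%N -> below (orbital_of f (e i)) x -> below (orbital_of f (e j)) x.
Proof.
rewrite leq_eqVlt => /orP[/eqP->//|lt_ij] below_x y Ojy; have ei := orb_rel_refl f (e i).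
exact: lt_trans (below_x _ ei) (chain_orbital_lt lt_ij ei Ojy).
Qed.

Lemma chain_piece_side p x : p <> Above -> chain_piece f e p x ->
  forall i, [/\ ((2 * i).+1 < piece_rank p)%N -> above (orbital_of f (e i)) x,
               (piece_rank p < (2 * i).+1)%N -> below (orbital_of f (e i)) x &
               piece_rank p = (2 * i).+1 -> orbital_of f (e i) x].
Proof.
case: p => [|j|j|] // _ /= px i; split=> r_i; try lia.
- by apply: chain_below_le px; lia.
- by move=> y Oiy; apply: chain_orbital_lt Oiy px; lia.
- by move=> y Oiy; apply: chain_orbital_lt px Oiy; lia.
- by have -> : i = j by lia.
- by apply: chain_above_le px.1; lia.
- by apply: chain_below_le px.2; lia.
Qed.

Lemma chain_pieces_ordered : ordered_pieces piece_lt (chain_piece f e).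
Proof.
move=> p q x y lt_pq px qy.
have nAp : p <> Above by case: p lt_pq {px}.
case: (pselect (q = Above)) => [qA|nAq].
  have [_ below_x _] := chain_piece_side nAp px (piece_rank p).
  have ek := orb_rel_refl f (e (piece_rank p)).
  by rewrite qA in qy; apply: lt_trans (below_x _ _ ek) (qy _ _ ek); lia.
have lt_r : (piece_rank p < piece_rank q)%N.
  by case: p q lt_pq nAp nAq {px qy} => [|?|?|] [|?|?|].
set i := (piece_rank p %/ 2)%N; have ei := orb_rel_refl f (e i).
have [above_x below_x in_x] := chain_piece_side nAp px i.
have [above_y below_y in_y] := chain_piece_side nAq qy i.
have [rp_i|rp_i] : piece_rank p = (2 * i).+1 \/ (piece_rank p < (2 * i).+1)%N by lia.
  by apply: above_y (in_x rp_i); lia.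
have [rq_i|rq_i] : piece_rank q = (2 * i).+1 \/ ((2 * i).+1 < piece_rank q)%N by lia.
  exact: below_x rp_i _ (in_y rq_i).
exact: lt_trans (below_x rp_i _ ei) (above_y rq_i _ ei).
Qed.

Lemma chain_pieces_cover x : exists p, chain_piece f e p x.
Proof.
apply: contrapT => /forallNP none; apply: (none Above) => i /=.
suff above_all n j : (j < n)%N -> above (orbital_of f (e j)) x by apply: (above_all i.+1).
elim: n j => [//|n IH] j; rewrite ltnS leq_eqVlt => /orP[/eqP->|]; last exact: IH.
case: (orbital_trichotomy f (e n) x) => [On_x|[below_x|//]]; first by case: (none (Orb n)).
case: n IH below_x => [|n] IH below_x; first by case: (none Below).
by case: (none (Gap n)); split=> //; apply: IH.
Qed.

Lemma chain_piece_orbital p i x : orbital_of f (e i) x -> chain_piece f e p x -> p = Orb i.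
Proof.
move=> Oix px; exact (ordered_pieces_uniq piece_lt_total chain_pieces_ordered px
  (Oix : chain_piece f e (Orb i) x)).
Qed.

End ChainPieces.

Section SplitConstruction.
Variables (f : aut) (a : nat -> rat).
Hypothesis chain_a : orbital_chain f a.
Hypothesis dir_uniform : forall n m, a n < f (a n) <-> a m < f (a m).
Hypothesis below_max_uniform : forall n m,
  has_max (below (orbital_of f (a n))) <-> has_max (below (orbital_of f (a m))).
Hypothesis above_min_uniform : forall n m,
  has_min (above (orbital_of f (a n))) <-> has_min (above (orbital_of f (a m))).

Let a_incr : forall n, a n < a n.+1. Proof. by case: chain_a. Qed.
Let a_moved : forall n, f (a n) <> a n. Proof. by case: chain_a. Qed.
Let a_sep : forall n m, n <> m -> ~ orb_rel f (a n) (a m). Proof. by case: chain_a. Qed.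

(* The even-indexed points of the chain give non-empty interiors to the gaps
   between the orbitals of the c's. *)
Let c i := a (2 * i).+1.
Let e i := c i.+1.

Let c_incr i : c i < c i.+1.
Proof. by apply: (homo_ltn lt_trans a_incr); lia. Qed.
Let c_sep i j : i <> j -> ~ orb_rel f (c i) (c j).
Proof. by move=> nij; apply: a_sep; lia. Qed.
Let e_incr i : e i < e i.+1. Proof. exact: c_incr. Qed.
Let e_sep i j : i <> j -> ~ orb_rel f (e i) (e j).
Proof. by move=> nij; apply: c_sep; lia. Qed.

Let a_orbital_lt n m x y : (n < m)%N ->
  orbital_of f (a n) x -> orbital_of f (a m) y -> x < y.
Proof. exact: chain_orbital_lt. Qed.

Let inner_gap j :
  inner (above (orbital_of f (c j)) `&` below (orbital_of f (c j.+1))) (a (2 * j).+2).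
Proof.
apply: (inner_of_orbital (@a_moved (2 * j).+2)) => y ay; split=> z az.
  by apply: a_orbital_lt az ay; lia.
by apply: a_orbital_lt ay az; lia.
Qed.

Let inner_below j : inner (below (orbital_of f (c j))) (a (2 * j)).
Proof.
apply: (inner_of_orbital (@a_moved (2 * j))) => y ay z az.
by apply: a_orbital_lt ay az; lia.
Qed.

Let same_direction i j :
  (c i < f (c i) /\ c j < f (c j)) \/ (f (c i) < c i /\ f (c j) < c j).
Proof.
have [lt_i|lt_i|/esym/a_moved//] := ltgtP (c i) (f (c i)).
  by left; split=> //; apply/(dir_uniform _ (2 * i).+1).
right; split=> //; have [lt_j|//|/esym/a_moved//] := ltgtP (c j) (f (c j)).
by have := (dir_uniform (2 * j).+1 (2 * i).+1).1 lt_j; rewrite ltNge (ltW lt_i).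
Qed.

Definition commutes_on_orbitals (p : piece) (F : rat -> rat) :=
  if p is Orb i then forall x, orbital_of f (e i) x -> F (f x) = f (F x) else True.

Let piece_oiso_ex p : exists F : oiso (chain_piece f e p) (chain_piece f c p),
  commutes_on_orbitals p F.
Proof.
case: p => [|i|i|].
- have min_iff :
      has_min (below (orbital_of f (c 1))) <-> has_min (below (orbital_of f (c 0))).
    by split=> /below_no_min.
  have [F] := convex_oiso (@below_convex _) (@below_convex _) (ex_intro _ _ (inner_below 1))
    (ex_intro _ _ (inner_below 0)) min_iff (below_max_uniform _ _).
  by exists F.
- exact: orbital_conj (same_direction i.+1 i).
- have gap_e := inner_gap i.+1; have gap_c := inner_gap i.
  have min_iff := iff_trans (gap_has_min gap_e.1)
    (iff_trans (above_min_uniform _ _) (iff_sym (gap_has_min gap_c.1))).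
  have max_iff := iff_trans (gap_has_max gap_e.1)
    (iff_trans (below_max_uniform _ _) (iff_sym (gap_has_max gap_c.1))).
  have cv_gap j : convex (above (orbital_of f (c j)) `&` below (orbital_of f (c j.+1))).
    exact: convexI (@above_convex _) (@below_convex _).
  have [F] := convex_oiso (cv_gap _) (cv_gap _) (ex_intro _ _ gap_e) (ex_intro _ _ gap_c)
    min_iff max_iff.
  by exists F.
- have eA x : (forall i, above (orbital_of f (e i)) x) <->
               (forall i, above (orbital_of f (c i)) x).
    split=> [above_e [|i]|above_c i]; [|exact: above_e|exact: above_c].
    exact (chain_above_le c_incr c_sep (isT : (0 <= 1)%N) (above_e 0%N)).
  by exists (oiso_cast eA (fun y => iff_refl _) (oiso_id _)).
Qed.

Let F p := proj1_sig (cid (piece_oiso_ex p)).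
Let F_comm p : commutes_on_orbitals p (F p) := proj2_sig (cid (piece_oiso_ex p)).

Let pieces_cover (b : nat -> rat) x : setT x <-> (\bigcup_p chain_piece f b p) x.
Proof. by split=> // _; have [p px] := chain_pieces_cover f b x; exists p. Qed.

Let h : aut := aut_of_oiso (oiso_cast (pieces_cover e) (pieces_cover c)
  (oiso_glue piece_lt_total F (chain_pieces_ordered e_incr e_sep)
     (chain_pieces_ordered c_incr c_sep))).

Let hE p x : chain_piece f e p x -> h x = F p x.
Proof. exact: oiso_glueE. Qed.

Let h_piece p x : chain_piece f e p x -> chain_piece f c p (h x).
Proof. by move=> px; rewrite (hE px); apply: oiso_in. Qed.

Let g := restrict (bigcup_orbital_closed f c).
Let g1 := restrict (orbital_closed f (c 0)).
Let g2 := restrict (bigcup_orbital_closed f e).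

(* [h] carries each [e]-piece into the matching [c]-piece, hence the support
   of [g2] onto that of [g]. *)
Let h_conj x : h (g2 x) = g (h x).
Proof.
case: (pselect ((\bigcup_i orbital_of f (e i)) x)) => [[i _ ex]|nex].
  have efx := orb_rel_trans ex (orb_rel_f f x).
  rewrite /g2 restrict_in; last by exists i.
  rewrite (hE (p := Orb i) efx) (F_comm (Orb i) x ex) -(hE (p := Orb i) ex).
  by rewrite /g restrict_in //; exists i => //; apply: (h_piece (p := Orb i)).
have [p px] := chain_pieces_cover f e x.
rewrite /g2 /g !restrict_out // => -[j _ chx]; apply: nex; exists j => //.
by have ep := chain_piece_orbital c_incr c_sep chx (h_piece px); rewrite ep in px.
Qed.

Lemma uniform_chain_split : has_split_restriction f.
Proof.
have c0_moved : f (c 0) <> c 0 := @a_moved 1.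
have c0_in : (\bigcup_i orbital_of f (c i)) (c 0) by exists 0%N => //; apply: orb_rel_refl.
exists g; split; first exact: restrict_restriction.
split; first by move/(_ (c 0)); rewrite /g restrict_in.
exists g1, g2; split.
  apply: restrict_split => [x|x c0x [i _ eix]].
    split=> [[[|i] _ cix]|[c0x|[i _ eix]]];
      [by left | by right; exists i | by exists 0%N | by exists i.+1].
  exact: c_sep (orb_rel_trans c0x (orb_rel_sym eix)).
split; first exact: restrict_orbital_elt c0_moved c0_in.
by exists h => q; rewrite h_conj autVK.
Qed.

End SplitConstruction.

Lemma orbital_chain_split f a : orbital_chain f a -> has_split_restriction f.
Proof.
move=> chain_a.
have [s1 s1_incr dir] := constant_subseq (fun n => a n < f (a n)).
have [s2 s2_incr below_max] :=
  constant_subseq (fun n => has_max (below (orbital_of f (a (s1 n))))).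
have [s3 s3_incr above_min] :=
  constant_subseq (fun n => has_min (above (orbital_of f (a (s1 (s2 n)))))).
have chain3 := orbital_chain_subseq (orbital_chain_subseq
  (orbital_chain_subseq chain_a s1_incr) s2_incr) s3_incr.
apply: (uniform_chain_split chain3) => n m; [exact: dir | exact: below_max | exact: above_min].
Qed.

Unset Implicit Arguments.
Theorem lemma2p1 (f : aut) :
  infinite_set (nontrivial_orbitals f) ->
  exists g : aut,
    restriction g f /\ ~ is_identity g /\
    exists g1 g2 : aut,
      (forall q, g q = g1 (g2 q)) /\ orbital_elt g1 g /\ conjugate g2 g.
Proof.
move=> /orbital_chain_of_infinite[a [chain_a|chain_a]].
  exact: orbital_chain_split chain_a.
exact/has_split_restriction_autN/(orbital_chain_split chain_a).
Qed.
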